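(* Let $\vec \theta \in \Lambda_0$. There are constants $c_{\{i,j\}}\in \{0, 1, \dots, g-1\}$, for $1 \leq i < j < k$, such that \[\vec \theta \equiv \sum_{1 \leq i < j < k} c_{\{i,j\}} \vec \alpha^{\{i,j\}} \pmod{2 \pi} \] (componentwise). Moreover, this representation of $\vec \theta$ is unique.
   Context: Let $g\ge 2$, $k\ge 2$ be integers, $\mathbb Z_g$ the integers mod $g$, and $d=\binom{k}{2}(g-1)$. Index the coordinates of $\mathbb R^d$ by pairs $(\{i,j\},a)$ with $1\le i<j\le k$ and $a\in\mathbb Z_g\setminus\{0\}$. Define $Z:(\mathbb Z_g)^k\to\mathbb R^d$ by $[Z(\vec x)]_{\{i,j\},a}=1-1/g$ if $x_i-x_j=a$ and $-1/g$ otherwise. Define $\Phi(\vec\theta)=\sum_{\vec x\in(\mathbb Z_g)^k} g^{-k}e^{i\vec\theta\cdot Z(\vec x)}$ for $\vec\theta\in\mathbb R^d$, $\Lambda=\{\vec\theta\in\mathbb R^d: |\Phi(\vec\theta)|=1\}$, and $\Lambda_0=\Lambda\cap[-\pi,\pi)^d$. Let $\mathbbm{1}_{\{i,j\},a}$ be the standard basis vector of $\mathbb R^d$ with a $1$ in coordinate $(\{i,j\},a)$. For $1\le i<j<k$ define \[ \vec \alpha^{\{i,j\}} = \sum_{n=1}^{g-1} \frac{2\pi n}{g} \mathbbm{1}_{\{i,j\},n}+ \sum_{n=1}^{g-1} \frac{2 \pi(g-n)}{g} \mathbbm{1}_{\{i,k\},n} + \sum_{n=1}^{g-1} \frac{2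 \pi n}{g} \mathbbm{1}_{\{j,k\},n},\] where $n$ is an integer in $[1,g-1]$ except in the subscripts, where it denotes the corresponding element of $\mathbb Z_g$. Congruence of vectors mod $2\pi$ means componentwise congruence. *)

From HB Require Import structures.
From mathcomp Require Import all_boot all_order all_algebra.
From mathcomp Require Import reals trigo.
Set Implicit Arguments. Unset Strict Implicit. Unset Printing Implicit Defensive.
Import Order.TTheory GRing.Theory Num.Theory.
Local Open Scope ring_scope.

(* Indices are 0-based: {1,...,k} is 'I_k, and the distinguished index k is
   the ordinal with value k.-1.  Z_g is 'Z_g (used only with 2 <= g). *)

(* Coordinates of R^d: triples ({i,j}, a) with i < j and a <> 0 in Z_g. *)
Definition dcoord (k g : nat) :=
  {p : 'I_k * 'I_k * 'Z_g | ((nat_of_ord p.1.1 < nat_of_ord p.1.2)%N && (p.2 != 0))}.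

Definition ci k g (p : dcoord k g) : 'I_k := (val p).1.1.
Definition cj k g (p : dcoord k g) : 'I_k := (val p).1.2.
Definition ca k g (p : dcoord k g) : 'Z_g := (val p).2.

Definition Zvec (R : realType) k g (x : {ffun 'I_k -> 'Z_g}) (p : dcoord k g) : R :=
  if x (ci p) - x (cj p) == ca p then 1 - (g%:R)^-1 else - (g%:R)^-1.

Definition phase (R : realType) k g (theta : dcoord k g -> R)
  (x : {ffun 'I_k -> 'Z_g}) : R :=
  \sum_(p : dcoord k g) theta p * @Zvec R k g x p.

(* Real and imaginary parts of Phi(theta) = sum_x g^{-k} e^{i theta.Z(x)}. *)
Definition Phi_re (R : realType) k g (theta : dcoord k g -> R) : R :=
  \sum_(x : {ffun 'I_k -> 'Z_g}) ((g%:R ^+ k)^-1 * cos (phase theta x)).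
Definition Phi_im (R : realType) k g (theta : dcoord k g -> R) : R :=
  \sum_(x : {ffun 'I_k -> 'Z_g}) ((g%:R ^+ k)^-1 * sin (phase theta x)).

Definition Phi_abs (R : realType) k g (theta : dcoord k g -> R) : R :=
  Num.sqrt (Phi_re theta ^+ 2 + Phi_im theta ^+ 2).

Definition Lambda (R : realType) k g (theta : dcoord k g -> R) : Prop :=
  Phi_abs theta = 1.

Definition Lambda0 (R : realType) k g (theta : dcoord k g -> R) : Prop :=
  Lambda theta /\ (forall p, - pi <= theta p < pi).

Definition ijpairs (k : nat) :=
  {q : 'I_k * 'I_k | ((nat_of_ord q.1 < nat_of_ord q.2)%N && (nat_of_ord q.2 < k.-1)%N)}.

Definition alpha (R : realType) k g (q : ijpairs k) (p : dcoord k g) : R :=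
  let i := (val q).1 in let j := (val q).2 in let n := nat_of_ord (ca p) in
  if (ci p == i) && (cj p == j) then 2 * pi * n%:R / g%:R
  else if (ci p == i) && (nat_of_ord (cj p) == k.-1) then 2 * pi * (g - n)%N%:R / g%:R
  else if (ci p == j) && (nat_of_ord (cj p) == k.-1) then 2 * pi * n%:R / g%:R
  else 0.

Definition congr_2pi (R : realType) k g (u v : dcoord k g -> R) : Prop :=
  forall p, exists m : int, u p - v p = m%:~R * (2 * pi).

Definition alpha_comb (R : realType) k g (c : {ffun ijpairs k -> 'I_g}) : dcoord k g -> R :=
  fun p => \sum_(q : ijpairs k) (nat_of_ord (c q))%:R * @alpha R k g q p.

From HB Require Import structures.
From mathcomp Require Import all_boot all_order all_algebra.
From mathcomp Require Import reals trigo.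
From mathcomp Require Import ring lra zify.
Set Implicit Arguments. Unset Strict Implicit. Unset Printing Implicit Defensive.
Import Order.TTheory GRing.Theory Num.Theory.
Local Open Scope ring_scope.

(* Phi(theta) is an average of unit complex numbers, so |Phi(theta)| = 1
   forces all phases theta.Z(x) to agree mod 2 pi.  Writing
   theta.Z(x) - theta.Z(0) = sum_(i,j) t_ij(x_i - x_j), where t_ij(a) is the
   coordinate ({i,j},a) of theta (and 0 when a = 0 or i >= j), a mixed second
   difference in x_i, x_j isolates t_ij, which is therefore additive mod 2 pi.
   Hence, mod 2 pi, t_ij(a) = a t_ij(1) and g t_ij(1) = 0, so that
   t_ij(1) = 2 pi c_ij / g for a unique c_ij in [0, g).  For j < k these are
   the coefficients of the alpha^{i,j}.  The last column is not free: moving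
   x_i alone gives sum_m t_im(1) = sum_l t_li(1) (mod 2 pi), which pins
   t_ik(1) to exactly what the alpha^{i,j} put on the coordinates ({i,k},a).
   Uniqueness is read off at the coordinates ({i,j},1) with j < k. *)

Definition twopiZ_pred {R : realType} (u : R) := u / (2 * pi) \is a Num.int.
Arguments twopiZ_pred {R} _ /.
Definition twopiZ {R : realType} := [qualify u : R | twopiZ_pred u].

Fact twopiZ_zmod_closed (R : realType) : zmod_closed (@twopiZ R).
Proof.
split; first by rewrite qualifE /= mul0r.
by move=> u v; rewrite !qualifE /= mulrBl; exact: rpredB.
Qed.

HB.instance Definition _ (R : realType) :=
  GRing.isZmodClosed.Build R twopiZ_pred (@twopiZ_zmod_closed R).

Section TwoPiZ.
Variable R : realType.
Implicit Types u t : R.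

Lemma pi2_neq0 : 2 * pi != 0 :> R.
Proof. by rewrite mulf_neq0 // gt_eqF // pi_gt0. Qed.

Lemma twopiZP u : reflect (exists m : int, u = m%:~R * (2 * pi)) (u \is twopiZ).
Proof.
rewrite qualifE /=; apply: (iffP intrP) => -[m hm]; exists m.
  by rewrite -hm mulfVK ?pi2_neq0.
by rewrite hm mulfK ?pi2_neq0.
Qed.

Lemma twopiZ_2pi : 2 * pi \is @twopiZ R.
Proof. by apply/twopiZP; exists 1; rewrite mul1r. Qed.

Lemma twopiZ_natmul (n : nat) u : u \is twopiZ -> n%:R * u \is twopiZ.
Proof. by rewrite mulr_natl; exact: rpredMn. Qed.

Lemma cosD_twopiZ (x : R) u : u \is twopiZ -> cos (x + u) = cos x.
Proof.
have cosDn y n : cos (y + n%:R * (2 * pi)) = cos y.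
  by rewrite mulr_natl [2 * pi]mulr_natl periodicn //; exact: cosD2pi.
move=> /twopiZP[[n|n] ->]; first exact: cosDn.
by rewrite NegzE mulrNz mulNr -[in RHS](subrK (n.+1%:R * (2 * pi)) x) cosDn.
Qed.

Lemma cos_eq1 t : cos t = 1 -> t \is twopiZ.
Proof.
move=> cos_t; have pi2_gt0 : 0 < 2 * pi :> R by rewrite mulr_gt0 ?pi_gt0.
pose m := Num.floor ((t + pi) / (2 * pi)); pose r := t - m%:~R * (2 * pi).
have m2pi : m%:~R * (2 * pi) \is @twopiZ R by apply/twopiZP; exists m.
have lb : m%:~R * (2 * pi) <= t + pi by rewrite -ler_pdivlMr ?floor_le.
have ub : t + pi < (m%:~R + 1) * (2 * pi).
  by rewrite -ltr_pdivrMr // -[1]/(1%:~R) -intrD floorD1_gt.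
have cos_r : cos `|r| = cos 0 by rewrite cos_norm cosD_twopiZ ?rpredN // cos_t cos0.
have /normr0_eq0 r0 : `|r| = 0.
  apply: cos_inj cos_r; rewrite !in_itv /= ?normr_ge0 ?lexx ?pi_ge0 // ler_norml.
  by rewrite /r; apply/andP; split; lra.
by rewrite -(subrK (m%:~R * (2 * pi)) t) -/r r0 add0r.
Qed.

Lemma residue_exists (n : nat) u : (0 < n)%N -> n%:R * u \is twopiZ ->
  exists c : 'I_n, u - 2 * pi * c%:R / n%:R \is twopiZ.
Proof.
move=> n_gt0 /twopiZP[m hm]; have n0 : n%:R != 0 :> R by rewrite pnatr_eq0 -lt0n.
have c_lt : (`|(m %% n)%Z|%N < n)%N by lia.
exists (Ordinal c_lt); apply/twopiZP; exists (m %/ n)%Z => /=.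
rewrite natr_absz ger0_norm ?modz_ge0 -?lt0n //.
have -> : u = m%:~R * (2 * pi) / n%:R by rewrite -hm; field.
by rewrite {1}(divz_eq m n) intrD intrM /=; field.
Qed.

Lemma residue_unique (n : nat) (c c' : 'I_n) :
  (2 * pi * c%:R / n%:R - 2 * pi * c'%:R / n%:R : R) \is twopiZ -> c = c'.
Proof.
(* [2 * pi] is abstracted because [field] would unfold [pi]. *)
move=> /twopiZP[z]; move: pi2_neq0; move: (2 * pi : R) => P P0 hz.
have n0 : n%:R != 0 :> R by rewrite pnatr_eq0 -lt0n (leq_ltn_trans _ (ltn_ord c)).
have : (c%:Z - c'%:Z)%:~R = (z * n)%:~R :> R.
  rewrite intrB intrM; transitivity ((P * c%:R / n%:R - P * c'%:R / n%:R) * n%:R / P).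
    by field; rewrite P0 n0.
  by rewrite hz; field.
move/intr_inj => e; apply: val_inj => /=; have := ltn_ord c; have := ltn_ord c'.
by case: (ltrgtP z 0) => z0; nia.
Qed.

Lemma sqr_sum_cos_sin (T : finType) (w phi : T -> R) :
  (\sum_x w x * cos (phi x)) ^+ 2 + (\sum_x w x * sin (phi x)) ^+ 2 =
  \sum_x \sum_y w x * w y * cos (phi x - phi y).
Proof.
rewrite !expr2 !mulr_suml -big_split /=; apply: eq_bigr => x _.
rewrite !mulr_sumr -big_split /=; apply: eq_bigr => y _.
by rewrite cosB; ring.
Qed.

Lemma mean_norm1_phase_sub (T : finType) (w phi : T -> R) :
  (forall x, 0 < w x) -> \sum_x w x = 1 ->
  (\sum_x w x * cos (phi x)) ^+ 2 + (\sum_x w x * sin (phi x)) ^+ 2 = 1 ->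
  forall x y, phi x - phi y \is twopiZ.
Proof.
move=> w_gt0 w_sum norm1 x y.
have term_ge0 x' y' : 0 <= w x' * w y' * (1 - cos (phi x' - phi y')).
  by rewrite mulr_ge0 ?subr_ge0 ?cos_le1 // ltW // mulr_gt0.
have : \sum_x' \sum_y' w x' * w y' * (1 - cos (phi x' - phi y')) = 0.
  transitivity ((\sum_x' w x') * (\sum_y' w y') - 1); last by rewrite w_sum mulr1 subrr.
  rewrite -[X in _ = _ - X]norm1 sqr_sum_cos_sin big_distrlr -sumrB; apply: eq_bigr => x' _.
  by rewrite -sumrB; apply: eq_bigr => y' _; rewrite mulrBr mulr1.
move/psumr_eq0P => /(_ (fun x' _ => sumr_ge0 _ (fun y' _ => term_ge0 x' y')) x isT).
move/psumr_eq0P => /(_ (fun y' _ => term_ge0 x y') y isT) /eqP.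
by rewrite !mulf_eq0 (gt_eqF (w_gt0 x)) (gt_eqF (w_gt0 y)) subr_eq0 => /eqP/esym/cos_eq1.
Qed.
End TwoPiZ.

Section PairSum.
Variables (R Z : zmodType) (I : finType) (t : I -> I -> Z -> R).

Definition pairsum (x : I -> Z) := \sum_i \sum_j t i j (x i - x j).

Definition point1 (i : I) (a : Z) (l : I) : Z := if l == i then a else 0.

Definition point2 (i j : I) (a b : Z) (l : I) : Z :=
  if l == i then a else if l == j then b else 0.

Lemma pairsum_mixed i j a b : i != j ->
  pairsum (point2 i j a b) - pairsum (point2 i j a 0)
    - pairsum (point2 i j 0 b) + pairsum (point2 i j 0 0) =
  t i j (a - b) - t i j a - t i j (- b) + t i j 0
    + (t j i (b - a) - t j i (- a) - t j i b + t j i 0).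
Proof.
move=> neq_ij; rewrite /pairsum !pair_bigA -!sumrB -big_split /=.
rewrite (bigD1 (i, j)) //= (bigD1 (j, i)) /=; last first.
  by rewrite xpair_eqE eq_sym (negbTE neq_ij).
rewrite big1 ?addr0; last first.
  (* Any other pair (l, m) sees at most one of the coordinates i, j. *)
  move=> [l m] /andP[]; rewrite !xpair_eqE /point2 /=.
  by case: (l == i); case: (l == j); case: (m == i); case: (m == j) => //= _ _;
    rewrite ?subrr ?sub0r ?addNr // addrAC subrK subrr.
have pt_i x y : point2 i j x y i = x by rewrite /point2 eqxx.
have pt_j x y : point2 i j x y j = y by rewrite /point2 eq_sym (negbTE neq_ij) eqxx.
by rewrite !pt_i !pt_j !subr0 !sub0r.
Qed.

Lemma pairsum_point1 i a : (forall l m, t l m 0 = 0) ->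
  pairsum (point1 i a) = \sum_(m | m != i) (t i m a + t m i (- a)).
Proof.
move=> t0; rewrite /pairsum (bigD1 i) //= big_split /=; congr (_ + _).
  rewrite (bigD1 i) //= /point1 eqxx subrr t0 add0r.
  by apply: eq_bigr => m /negbTE ->; rewrite subr0.
apply: eq_bigr => l /negbTE nli; rewrite (bigD1 i) //= /point1 nli eqxx sub0r.
by rewrite big1 ?addr0 // => m /negbTE ->; rewrite subrr t0.
Qed.
End PairSum.

Section ExtendByZero.
Variables (T : finType) (P : pred T) (V : nmodType).

Definition extz (F : {x | P x} -> V) (x : T) : V :=
  if insub x is Some y then F y else 0.

Lemma extz_val F y : extz F (val y) = F y.
Proof. by rewrite /extz valK. Qed.

Lemma extz_out F x : ~~ P x -> extz F x = 0.
Proof. by move=> Px; rewrite /extz insubN. Qed.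

Lemma sum_val_supp (F : T -> V) : (forall x, ~~ P x -> F x = 0) ->
  \sum_(y : {x | P x}) F (val y) = \sum_x F x.
Proof.
by move=> F0; rewrite (bigID P) /= [X in _ + X]big1 ?addr0 // (big_sub P).
Qed.
End ExtendByZero.

Definition theta_at (R : realType) k g (theta : dcoord k g -> R)
  (i j : 'I_k) (a : 'Z_g) : R := extz theta (i, j, a).

Section Phase.
Variables (R : realType) (k g : nat) (theta : dcoord k g -> R).
Local Notation t := (theta_at theta).

Lemma theta_at0 (l m : 'I_k) : t l m 0 = 0.
Proof. by rewrite /theta_at extz_out // eqxx andbF. Qed.

Lemma theta_at_out (l m : 'I_k) a : ~~ (l < m)%N -> t l m a = 0.
Proof. by move=> lm; rewrite /theta_at extz_out // (negbTE lm). Qed.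

Lemma theta_at_val p : t (ci p) (cj p) (ca p) = theta p.
Proof. by rewrite /theta_at -!surjective_pairing extz_val. Qed.

Lemma Zvec_sub0 (x : {ffun 'I_k -> 'Z_g}) (p : dcoord k g) :
  Zvec R x p - Zvec R [ffun => 0] p = (x (ci p) - x (cj p) == ca p)%:R.
Proof.
have /andP[_ a_neq0] := valP p.
rewrite /Zvec !ffunE subrr [0 == _]eq_sym (negbTE a_neq0).
by case: (_ == _); rewrite ?subrr // opprK subrK.
Qed.

Lemma phase_sub0 x : phase theta x - phase theta [ffun => 0] = pairsum t x.
Proof.
rewrite /phase -sumrB.
under eq_bigr => p _ do rewrite -mulrBr Zvec_sub0 -theta_at_val.
rewrite (sum_val_supp (F := fun s => t s.1.1 s.1.2 s.2 * (x s.1.1 - x s.1.2 == s.2)%:R));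
  last by move=> s s_out; rewrite /theta_at extz_out ?mul0r.
rewrite -(pair_bigA _ (fun ij a => t ij.1 ij.2 a * (x ij.1 - x ij.2 == a)%:R)) /=.
rewrite -(pair_bigA _ (fun i j => \sum_a t i j a * (x i - x j == a)%:R)) /=.
apply: eq_bigr => i _; apply: eq_bigr => j _.
rewrite (big_only1 (x i - x j)) ?eqxx ?mulr1 // => a /negbTE.
by rewrite eq_sym => ->; rewrite mulr0.
Qed.

Lemma Lambda_pairsum : (1 < g)%N -> Lambda theta ->
  forall x : 'I_k -> 'Z_g, pairsum t x \is twopiZ.
Proof.
move=> g_gt1 hL x; have -> : pairsum t x = pairsum t [ffun l => x l].
  by apply: eq_bigr => i _; apply: eq_bigr => j _; rewrite !ffunE.
rewrite -phase_sub0.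
have gk_gt0 : 0 < g%:R ^+ k :> R by rewrite exprn_gt0 // ltr0n ltnW.
apply: (mean_norm1_phase_sub (w := fun=> (g%:R ^+ k)^-1)) => [_||].
- by rewrite invr_gt0.
- rewrite sumr_const card_ffun !card_ord Zp_cast //.
  by rewrite -(mulr_natr _ (g ^ k)) natrX mulVf ?gt_eqF.
- move: hL => /(congr1 (fun r => r ^+ 2)).
  by rewrite sqr_sqrtr ?addr_ge0 ?sqr_ge0 // expr1n.
Qed.
End Phase.

(* [alpha] with its index pair ranging over all of ['I_k * 'I_k]:
   [alpha R q p] is convertible to [alpha_at R (val q).1 (val q).2 p]. *)
Definition alpha_at (R : realType) k g (l m : 'I_k) (p : dcoord k g) : R :=
  let n := nat_of_ord (ca p) in
  if (ci p == l) && (cj p == m) then 2 * pi * n%:R / g%:R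
  else if (ci p == l) && (nat_of_ord (cj p) == k.-1) then 2 * pi * (g - n)%N%:R / g%:R
  else if (ci p == m) && (nat_of_ord (cj p) == k.-1) then 2 * pi * n%:R / g%:R
  else 0.

Definition coef k g (c : {ffun ijpairs k -> 'I_g}) (l m : 'I_k) : nat :=
  extz (fun q => nat_of_ord (c q)) (l, m).

Section AlphaComb.
Variables (R : realType) (k g : nat).
Implicit Types (c : {ffun ijpairs k -> 'I_g}) (l m : 'I_k) (p : dcoord k g).

Lemma coef_val c q : coef c (val q).1 (val q).2 = c q.
Proof. by rewrite /coef -surjective_pairing extz_val. Qed.

Lemma coef_out c l m : ~~ ((l < m)%N && (m < k.-1)%N) -> coef c l m = 0%N.
Proof. by move=> lm; rewrite /coef extz_out. Qed.

Lemma alpha_combE c p :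
  alpha_comb R c p = \sum_l \sum_m (coef c l m)%:R * alpha_at R l m p.
Proof.
pose P (lm : 'I_k * 'I_k) := (lm.1 < lm.2)%N && (lm.2 < k.-1)%N.
rewrite pair_bigA /= -(sum_val_supp (P := P)).
  by apply: eq_bigr => q _; rewrite coef_val.
by move=> lm /coef_out ->; rewrite mul0r.
Qed.

Lemma alpha_comb_inner c p : (cj p < k.-1)%N ->
  alpha_comb R c p = (coef c (ci p) (cj p))%:R * (2 * pi * (ca p)%:R / g%:R).
Proof.
move=> j_lt; rewrite alpha_combE pair_bigA (big_only1 (ci p, cj p)) //= => [|[l m] + _].
  by rewrite /alpha_at !eqxx.
rewrite /alpha_at (ltn_eqF j_lt) !andbF xpair_eqE => /negbTE.
by rewrite [ci p == l]eq_sym [cj p == m]eq_sym => ->; rewrite mulr0.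
Qed.

Lemma alpha_comb_last c p : nat_of_ord (cj p) = k.-1 ->
  alpha_comb R c p =
    \sum_m (coef c (ci p) m)%:R * (2 * pi * (g - ca p)%N%:R / g%:R)
    + \sum_l (coef c l (ci p))%:R * (2 * pi * (ca p)%:R / g%:R).
Proof.
move=> j_last; set i := ci p.
have term l m : (coef c l m)%:R * alpha_at R l m p =
    if l == i then (coef c l m)%:R * (2 * pi * (g - ca p)%N%:R / g%:R)
    else if m == i then (coef c l m)%:R * (2 * pi * (ca p)%:R / g%:R) else 0.
  have [/andP[_ m_lt] | /coef_out ->] := boolP ((l < m)%N && (m < k.-1)%N); last first.
    by rewrite !mul0r; case: (l == i); case: (m == i).
  have j_neq : (cj p == m) = false by rewrite -val_eqE /= j_last eq_sym ltn_eqF.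
  rewrite /alpha_at j_neq j_last eqxx !andbT ![ci p == _]eq_sym -/i andbF /=.
  by case: (l == i); case: (m == i); rewrite ?mulr0.
rewrite alpha_combE (bigD1 i) //=; under eq_bigr do rewrite term eqxx.
congr (_ + _); rewrite [RHS](bigD1 i) //= coef_out ?ltnn // mul0r add0r.
apply: eq_bigr => l /negbTE l_neq; under eq_bigr do rewrite term l_neq.
by rewrite -big_mkcond big_pred1_eq.
Qed.

Lemma alpha_comb_inj c c' :
  (forall p, alpha_comb R c p - alpha_comb R c' p \is twopiZ) -> c = c'.
Proof.
move=> hcc'; apply/ffunP => q; apply: residue_unique.
have /andP[lm m_lt] := valP q.
have hp : ((val q).1 < (val q).2)%N && ((1 : 'Z_g) != 0) by rewrite lm oner_neq0.
have := hcc' (Sub ((val q).1, (val q).2, 1) hp).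
rewrite !alpha_comb_inner //= !coef_val modn_small // mulr1.
by congr (_ \is _); ring.
Qed.
End AlphaComb.

Section Coefficients.
Variables (R : realType) (k g : nat) (theta : dcoord k g -> R).
Hypothesis g_gt1 : (1 < g)%N.
Hypothesis pairsum_twopiZ : forall x : 'I_k -> 'Z_g, pairsum (theta_at theta) x \is twopiZ.
Local Notation t := (theta_at theta).
Implicit Types (l m : 'I_k) (c : {ffun ijpairs k -> 'I_g}).

Lemma theta_atD l m a b : t l m (a + b) - t l m a - t l m b \is twopiZ.
Proof.
have [lm | /theta_at_out t0] := boolP (l < m)%N; last by rewrite !t0 !subr0 rpred0.
have := rpredD (rpredB (rpredB (pairsum_twopiZ (point2 l m a (- b)))
  (pairsum_twopiZ (point2 l m a 0))) (pairsum_twopiZ (point2 l m 0 (- b))))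
  (pairsum_twopiZ (point2 l m 0 0)).
have t_ml a' : t m l a' = 0 by rewrite theta_at_out // -leqNgt ltnW.
by rewrite pairsum_mixed ?neq_ltn ?lm // !t_ml !theta_at0 !opprK !subr0 !addr0.
Qed.

Lemma theta_at_natmul l m n : t l m n%:R - n%:R * t l m 1 \is twopiZ.
Proof.
elim: n => [|n IHn]; first by rewrite theta_at0 mul0r subr0 rpred0.
suff -> : t l m n.+1%:R - n.+1%:R * t l m 1 =
    (t l m (n%:R + 1) - t l m n%:R - t l m 1) + (t l m n%:R - n%:R * t l m 1).
  by rewrite rpredD ?theta_atD.
by rewrite -!natr1; ring.
Qed.

Lemma theta_at_linear l m (a : 'Z_g) : t l m a - (a : nat)%:R * t l m 1 \is twopiZ.
Proof. by have := theta_at_natmul l m a; rewrite natr_Zp. Qed.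

Lemma theta_at_torsion l m : g%:R * t l m 1 \is twopiZ.
Proof. by have := theta_at_natmul l m g; rewrite pchar_Zp // theta_at0 sub0r rpredN. Qed.

Lemma theta_atN l m a : t l m (- a) + t l m a \is twopiZ.
Proof. by have := theta_atD l m (- a) a; rewrite addNr theta_at0 sub0r -opprD rpredN. Qed.

Lemma theta_at_balance (i : 'I_k) : \sum_m t i m 1 - \sum_l t l i 1 \is twopiZ.
Proof.
have t_ii a : t i i a = 0 by rewrite theta_at_out ?ltnn.
have := pairsum_twopiZ (point1 i 1); rewrite pairsum_point1; last exact: theta_at0.
move=> hrow; have hcol : \sum_(m | m != i) (t m i (- 1) + t m i 1) \is twopiZ.
  by apply: rpred_sum => m _; exact: theta_atN.
suff -> : \sum_m t i m 1 - \sum_l t l i 1 =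
    \sum_(m | m != i) (t i m 1 + t m i (- 1)) - \sum_(m | m != i) (t m i (- 1) + t m i 1).
  by rewrite rpredB.
rewrite [\sum_m _](bigD1 i) //= [\sum_l _](bigD1 i) //= !t_ii !add0r !big_split /=; ring.
Qed.

Lemma coef_exists : exists c, forall l m, (m < k.-1)%N ->
  t l m 1 - 2 * pi * (coef c l m)%:R / g%:R \is twopiZ.
Proof.
have [c hc] := fin_all_exists (fun q : ijpairs k =>
  residue_exists (ltnW g_gt1) (theta_at_torsion (val q).1 (val q).2)).
exists [ffun q => c q] => l m m_lt.
have [lm | lm] := boolP (l < m)%N; last first.
  by rewrite theta_at_out // coef_out ?(negbTE lm) // mulr0 mul0r subr0 rpred0.
have hq : (l < m)%N && (m < k.-1)%N by rewrite lm.
have := coef_val [ffun q => c q] (Sub (l, m) hq); rewrite ffunE /= => ->.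
exact (hc (Sub (l, m) hq)).
Qed.

Section Congruence.
Variable c : {ffun ijpairs k -> 'I_g}.
Hypothesis coef_twopiZ : forall l m, (m < k.-1)%N ->
  t l m 1 - 2 * pi * (coef c l m)%:R / g%:R \is twopiZ.

Lemma theta_at_last (i j : 'I_k) : nat_of_ord j = k.-1 -> (i < j)%N ->
  t i j 1 - 2 * pi * (\sum_l (coef c l i)%:R - \sum_m (coef c i m)%:R) / g%:R
    \is twopiZ.
Proof.
move=> j_last ij; have i_lt : (i < k.-1)%N by rewrite -j_last.
have hrow : \sum_(m | m != j) (t i m 1 - 2 * pi * (coef c i m)%:R / g%:R) \is twopiZ.
  apply: rpred_sum => m m_neq; apply: coef_twopiZ.
  by move: m_neq; rewrite -val_eqE /= j_last; have := ltn_ord m; lia.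
have hcol : \sum_l (t l i 1 - 2 * pi * (coef c l i)%:R / g%:R) \is twopiZ.
  by apply: rpred_sum => l _; exact: coef_twopiZ.
suff -> : t i j 1 - 2 * pi * (\sum_l (coef c l i)%:R - \sum_m (coef c i m)%:R) / g%:R =
    (\sum_m t i m 1 - \sum_l t l i 1)
    - \sum_(m | m != j) (t i m 1 - 2 * pi * (coef c i m)%:R / g%:R)
    + \sum_l (t l i 1 - 2 * pi * (coef c l i)%:R / g%:R).
  exact: rpredD (rpredB (theta_at_balance i) hrow) hcol.
rewrite [\sum_m t i m 1](bigD1 j) //= [\sum_m (coef c i m)%:R](bigD1 j) //=.
rewrite coef_out ?j_last ?ltnn ?andbF // add0r !sumrB -!mulr_suml -!mulr_sumr; ring.
Qed.

Lemma theta_sub_alpha_comb p : theta p - alpha_comb R c p \is twopiZ.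
Proof.
rewrite -theta_at_val; set i := ci p; set j := cj p; set a := ca p.
have ij : (i < j)%N by case/andP: (valP p).
have ha := theta_at_linear i j a.
have [j_lt | j_ge] := ltnP j k.-1.
  suff -> : t i j a - alpha_comb R c p = (t i j a - (a : nat)%:R * t i j 1)
      + (a : nat)%:R * (t i j 1 - 2 * pi * (coef c i j)%:R / g%:R).
    exact: rpredD ha (twopiZ_natmul _ (coef_twopiZ _ j_lt)).
  by rewrite alpha_comb_inner //; ring.
have j_last : nat_of_ord j = k.-1 by have := ltn_ord j; lia.
(* On the last column (g - a)/g replaces -a/g; the difference is a multiple of 2 pi. *)
have a_le : (a <= g)%N by rewrite ltnW // -[g in (_ < g)%N]Zp_cast.
suff -> : t i j a - alpha_comb R c p = (t i j a - (a : nat)%:R * t i j 1)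
    + (a : nat)%:R * (t i j 1 - 2 * pi * (\sum_l (coef c l i)%:R - \sum_m (coef c i m)%:R) / g%:R)
    - (\sum_m coef c i m)%:R * (2 * pi).
  exact: rpredB (rpredD ha (twopiZ_natmul _ (theta_at_last j_last ij)))
    (twopiZ_natmul _ (twopiZ_2pi R)).
rewrite alpha_comb_last // -!mulr_suml natrB // natr_sum; field.
by rewrite pnatr_eq0 -lt0n ltnW.
Qed.
End Congruence.
End Coefficients.

Theorem lemma2p9 (R : realType) (g k : nat) (hg : (2 <= g)%N) (hk : (2 <= k)%N)
  (theta : dcoord k g -> R) :
  Lambda0 theta ->
  exists! c : {ffun ijpairs k -> 'I_g}, congr_2pi theta (@alpha_comb R k g c).
Proof.
move=> [hL _]; have hsum := Lambda_pairsum hg hL.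
have [c hc] := coef_exists hg hsum.
exists c; split=> [p | c' hc'].
  by apply/twopiZP; exact: theta_sub_alpha_comb.
apply: (alpha_comb_inj (R := R)) => p; have /twopiZP hc'p := hc' p.
have -> : alpha_comb R c p - alpha_comb R c' p =
    (theta p - alpha_comb R c' p) - (theta p - alpha_comb R c p) by ring.
exact: rpredB hc'p (theta_sub_alpha_comb hg hsum hc p).
Qed.
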